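(* Let $(C_q,\varphi)$ be a complex unit gain cycle of length $q\ge 3$. Then $r(C_q,\varphi)=2q-2c(C_q)-2\alpha(C_q)$ if and only if either $q$ is even and $\varphi(C_q)=(-1)^{q/2}$, or $q$ is odd and $\mathrm{Re}\big((-1)^{(q-1)/2}\varphi(C_q)\big)=0$.
   Context: A complex unit gain graph $(G,\varphi)$ is a simple finite graph $G$ with a gain function $\varphi$ assigning to each oriented edge $e_{ij}$ a complex number of modulus $1$ with $\varphi(e_{ji})=\overline{\varphi(e_{ij})}$; its adjacency matrix has $(i,j)$-entry $\varphi(e_{ij})$ for adjacent $v_i,v_j$ and $0$ otherwise, and $r(G,\varphi)$ is its rank. $\alpha$ is the independence number and $c(G)=|E(G)|-|V(G)|+\omega(G)$ the cyclomatic number ($\omega$ = number of components). For a cycle $C_q=u_1\cdots u_qu_1$, $\varphi(C_q)=\varphi(e_{u_1u_2})\cdots\varphi(e_{u_{q-1}u_q})\varphi(e_{u_qu_1})$. *)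

From HB Require Import structures.
From mathcomp Require Import all_boot all_order all_algebra.
Set Implicit Arguments. Unset Strict Implicit. Unset Printing Implicit Defensive.
Import Order.TTheory GRing.Theory Num.Theory.
Local Open Scope ring_scope.

Definition simple_graph (T : finType) (e : rel T) : Prop :=
  symmetric e /\ irreflexive e.

Definition independent (T : finType) (e : rel T) (S : {set T}) : bool :=
  [forall x in S, forall y in S, ~~ e x y].

Definition alpha (T : finType) (e : rel T) : nat :=
  \max_(S : {set T} | independent e S) #|S|.

(* Number of (undirected) edges: each edge gives two ordered adjacent pairs. *)
Definition nedges (T : finType) (e : rel T) : nat :=
  (#|[set p : T * T | e p.1 p.2]| %/ 2)%N.

Definition ncomp (T : finType) (e : rel T) : nat := n_comp e T.

Definition cyclomatic (T : finType) (e : rel T) : int :=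
  (nedges e)%:Z - (#|T|)%:Z + (ncomp e)%:Z.

Definition cycle_adj (q : nat) : rel 'I_q :=
  fun i j => (j == ordS i) || (i == ordS j).

Definition unit_gain (C : numClosedFieldType) (T : finType) (e : rel T)
    (phi : T -> T -> C) : Prop :=
  forall i j, e i j -> `|phi i j| = 1 /\ phi j i = (phi i j)^*.

Definition gain_adj (C : numClosedFieldType) (n : nat) (e : rel 'I_n)
    (phi : 'I_n -> 'I_n -> C) : 'M[C]_n :=
  \matrix_(i, j) (if e i j then phi i j else 0).

Definition gain_rank (C : numClosedFieldType) (n : nat) (e : rel 'I_n)
    (phi : 'I_n -> 'I_n -> C) : nat := \rank (gain_adj e phi).

Definition cycle_gain (C : numClosedFieldType) (q : nat)
    (phi : 'I_q -> 'I_q -> C) : C :=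
  \prod_(i < q) phi i (ordS i).

(* Switching by the potential s(k) = phi(0,1) phi(1,2) ... phi(k-1,k) (a diagonal
   unitary similarity) moves the whole gain of the cycle onto the edge (q-1, 0), so
   A(C_q, phi) has the rank of the matrix B whose only non-trivial gain is
   g = phi(C_q), on that edge.  As c(C_q) = 1 and alpha(C_q) = q/2 (rounded down), the
   claim is that rank B is q - 2 for even q and q - 1 for odd q.  A row u with u B = 0
   satisfies u(k+1) = - u(k-1) at every vertex k other than 0 and q-1, hence is a
   combination of the two alternating-sign rows of altmx; therefore
   rank B = q - 2 + rank M, with M the 2x2 block of altmx * B on the columns 0 and q-1.
   For even q, M = 0 exactly when g = (-1)^(q/2); for odd q, M has an entry 1 and
   det M = - (g + conj g), so rank M = 1 exactly when Re g = 0. *)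

From HB Require Import structures.
From mathcomp Require Import all_boot all_order all_algebra zify.
Import Order.TTheory GRing.Theory Num.Theory.
Set Implicit Arguments. Unset Strict Implicit. Unset Printing Implicit Defensive.

Lemma ordS_val n (i : 'I_n) : nat_of_ord (ordS i) = if i.+1 < n then i.+1 else 0.
Proof.
rewrite /=; case: ltnP => [lt_in|le_ni]; first by rewrite modn_small.
by rewrite (_ : i.+1 = n) ?modnn //; have := ltn_ord i; lia.
Qed.

Lemma ordSS_neq n (i : 'I_n) : 3 <= n -> ordS (ordS i) != i.
Proof.
move=> n_ge3; apply/eqP => /(congr1 (@nat_of_ord n)); rewrite !ordS_val.
have := ltn_ord i; case: (ltnP i.+1 n) => ?; case: ifP => ?; lia.
Qed.

Lemma ordS_neq_pred n (i : 'I_n) : 3 <= n -> ordS i != ord_pred i.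
Proof.
by move=> n_ge3; apply: contraNneq (ordSS_neq i n_ge3) => ->; rewrite ord_predK.
Qed.

Lemma cycle_adj_sym n : symmetric (@cycle_adj n).
Proof. by move=> i j; rewrite /cycle_adj orbC. Qed.

Lemma cycle_adjE n (i j : 'I_n) : cycle_adj i j = (j == ordS i) || (j == ord_pred i).
Proof. by rewrite /cycle_adj [i == _]eq_sym (can2_eq (@ordSK n) (@ord_predK n)). Qed.

Lemma nedges_cycle n : 3 <= n -> nedges (@cycle_adj n) = n.
Proof.
move=> n_ge3; rewrite /nedges -sum1dep_card.
rewrite -(pair_big_dep xpredT (@cycle_adj n) (fun _ _ => 1%N)) /=.
rewrite (eq_bigr (fun _ => 2)) ?sum_nat_const ?card_ord ?mulnK // => i _.
rewrite (bigD1 (ordS i)) ?cycle_adjE ?eqxx //= (bigD1 (ord_pred i)) /=; last first.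
  by rewrite cycle_adjE eqxx orbT eq_sym ordS_neq_pred.
rewrite big1 // => j /andP[/andP[]]; rewrite cycle_adjE.
by case/orP=> /eqP->; rewrite eqxx.
Qed.

Lemma ncomp_cycle n : ncomp (@cycle_adj n.+1) = 1.
Proof.
rewrite /ncomp -(n_comp_connect (sym_connect_sym (@cycle_adj_sym n.+1)) ord0).
apply: eq_n_comp_r => x; rewrite !inE; symmetry.
suff conn0 k (lt_kn : k < n.+1) : connect (@cycle_adj n.+1) ord0 (Ordinal lt_kn).
  by case: x => x lt_xn; rewrite conn0.
elim: k lt_kn => [|k IHk] lt_kn.
  by rewrite (_ : Ordinal _ = ord0) ?connect0 //; apply: val_inj.
apply: connect_trans (IHk (ltnW lt_kn)) (connect1 _).
by rewrite /cycle_adj -val_eqE /= modn_small ?eqxx.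
Qed.

Lemma alpha_cycle n : alpha (@cycle_adj n) = n./2.
Proof.
apply/eqP; rewrite eqn_leq; apply/andP; split.
  apply/bigmax_leqP => S indS.
  have disjS : [disjoint S & @ordS n @: S].
    apply/pred0P => x /=; apply/andP => -[Sx /imsetP[y Sy def_x]].
    move/forall_inP: indS => /(_ y Sy)/forall_inP/(_ x Sx).
    by rewrite /cycle_adj def_x eqxx.
  have := max_card (S :|: @ordS n @: S); rewrite cardsU (disjoint_setI0 disjS) cards0.
  by rewrite card_imset ?card_ord; last exact: ordS_inj; rewrite -divn2; lia.
have lt_ev (k : 'I_n./2) : k.*2.+1 < n by case: k => k; rewrite /= -divn2; lia.
pose ev k : 'I_n := Ordinal (ltnW (lt_ev k)).
have ordS_ev k : nat_of_ord (ordS (ev k)) = k.*2.+1 by rewrite ordS_val lt_ev.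
have ev_inj : injective ev.
  by move=> k l [] eq_kl; apply: ord_inj; move: eq_kl; rewrite -!muln2; lia.
rewrite -[X in X <= _](card_ord n./2) -(card_imset _ ev_inj).
apply: (leq_bigmax_cond (F := fun S : {set 'I_n} => #|S|)).
apply/forall_inP => _ /imsetP[k _ ->]; apply/forall_inP => _ /imsetP[l _ ->].
rewrite /cycle_adj; apply/norP; split; apply/eqP => /(congr1 (@nat_of_ord n));
  by rewrite ordS_ev /= -!muln2; lia.
Qed.

Local Open Scope ring_scope.

Lemma cyclomatic_cycle n : (3 <= n)%N -> cyclomatic (@cycle_adj n) = 1.
Proof.
case: n => // n n_ge3.
by rewrite /cyclomatic nedges_cycle // card_ord ncomp_cycle addrN add0r.
Qed.

Lemma det_mx22 (R : comNzRingType) (A : 'M[R]_2) :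
  \det A = A 0 0 * A 1 1 - A 0 1 * A 1 0.
Proof.
rewrite (expand_det_row _ 0) !big_ord_recl big_ord0 addr0 /cofactor !det_mx11 !mxE.
rewrite expr0 expr1 !mul1r mulN1r mulrN.
by congr (_ * _ - _ * _); congr (A _ _); apply: val_inj.
Qed.

Lemma mxrank2_eq1 (F : fieldType) (A : 'M[F]_2) :
  A != 0 -> (\rank A = 1)%N <-> \det A = 0.
Proof.
rewrite -mxrank_eq0 => rk_neq0; have rk_le2 := rank_leq_row A.
have rk2E : (\rank A == 2) = (\det A != 0).
  by rewrite -[_ == 2]/(row_free A) row_free_unit unitmxE unitfE.
split => [rk1|det0]; first by apply/eqP; rewrite -[_ == 0]negbK -rk2E rk1.
by move: rk2E; rewrite det0 eqxx /=; lia.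
Qed.

Lemma Re_eq0 (C : numClosedFieldType) (z : C) : 'Re z = 0 <-> z + z^* = 0.
Proof.
rewrite ReE; split => [/eqP|->]; last by rewrite mul0r.
by rewrite mulf_eq0 invr_eq0 pnatr_eq0 orbF => /eqP.
Qed.

Lemma mxrank_kermx_sub (F : fieldType) m n p (A : 'M[F]_(n, p)) (L : 'M_(m, n)) :
  row_free L -> (kermx A <= L)%MS -> (\rank A + m = n + \rank (L *m A))%N.
Proof.
move=> /eqP rkL /capmx_idPr capLK; have := mxrank_mul_ker L A.
by rewrite capLK mxrank_ker rkL; have := rank_leq_row A; lia.
Qed.

Lemma colsubE (R : pzSemiRingType) m n p (f : 'I_p -> 'I_n) (X : 'M[R]_(m, n)) :
  colsub f X = X *m colsub f 1%:M.
Proof. by rewrite mulmx_colsub mulmx1. Qed.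

Lemma mxrank_colsub_supp (F : fieldType) m n p (f : 'I_p -> 'I_n) (X : 'M[F]_(m, n)) :
  injective f -> (forall j, j \notin codom f -> col j X = 0) ->
  \rank (colsub f X) = \rank X.
Proof.
move=> f_inj suppX; have le_sub : (\rank (colsub f X) <= \rank X)%N.
  by rewrite colsubE mxrankM_maxl.
apply/eqP; rewrite eqn_leq le_sub /=.
suff {1}-> : X = colsub f X *m (colsub f 1%:M)^T by rewrite mxrankM_maxl.
apply/matrixP => i j; rewrite !mxE.
have [/codomP[c ->]|fj] := boolP (j \in codom f).
  rewrite (bigD1 c) //= big1 => [|c' ne_c']; rewrite !mxE ?eqxx ?mulr1 ?addr0 //.
  by rewrite eq_sym (inj_eq f_inj) (negbTE ne_c') mulr0.
have /matrixP/(_ i 0) := suppX j fj; rewrite !mxE => ->.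
rewrite big1 // => c _; rewrite !mxE; case: eqP => [def_j|]; last by rewrite mulr0.
by case/codomP: fj; exists c.
Qed.

Lemma gain_adj_switch (C : numClosedFieldType) n (e : rel 'I_n)
    (phi psi : 'I_n -> 'I_n -> C) (s : 'I_n -> C) :
  (forall i, `|s i| = 1) ->
  (forall i j, e i j -> psi i j = s i * phi i j * (s j)^*) ->
  \rank (gain_adj e psi) = \rank (gain_adj e phi).
Proof.
move=> s_unit psiE.
pose D := diag_mx (\row_i s i); pose D' := diag_mx (\row_i (s i)^*).
have [D_unit D'_unit] : D \in unitmx /\ D' \in unitmx.
  apply: mulmx1_unit; apply/matrixP => i j; rewrite mul_diag_mx !mxE.
  by case: eqP => [->|_]; rewrite ?mulr0 // mulr1n -normCK s_unit expr1n.
have -> : gain_adj e psi = D *m gain_adj e phi *m D'.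
  apply/matrixP => i j; rewrite mul_mx_diag mul_diag_mx !mxE.
  by case: ifP => [/psiE|_]; rewrite ?mulr0 ?mul0r.
by rewrite mxrankMfree ?row_free_unit // eqmxMfull ?row_full_unit.
Qed.

Section GainCycle.

Variables (C : numClosedFieldType) (n : nat).
Hypothesis n_gt1 : (1 < n)%N.

Implicit Types (i j : 'I_n.+1) (g : C) (phi psi : 'I_n.+1 -> 'I_n.+1 -> C).

Lemma ordS_max : ordS (ord_max : 'I_n.+1) = ord0.
Proof. by apply: val_inj; rewrite /= modnn. Qed.

Lemma ord_max_neq0 : (ord_max : 'I_n.+1) != ord0.
Proof. by rewrite -val_eqE /= -lt0n ltnW. Qed.

Lemma ordS_eq0 j : (ordS j == ord0) = (j == ord_max).
Proof. by rewrite -ordS_max (inj_eq (@ordS_inj _)). Qed.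

Lemma ordS_val_lt j : j != ord_max -> nat_of_ord (ordS j) = j.+1.
Proof.
move=> ne_max; rewrite ordS_val ifT // ltnS ltn_neqAle -ltnS ltn_ord andbT.
by apply: contra ne_max => /eqP eq_jn; apply/eqP/val_inj.
Qed.

Lemma ord_pred_val j : j != ord0 -> nat_of_ord (ord_pred j) = j.-1.
Proof.
move=> ne0; have := ordS_val (ord_pred j); rewrite ord_predK.
have : j != 0%N :> nat by apply: contra ne0 => /eqP eq_j0; apply/eqP/val_inj.
by case: ifP => _; lia.
Qed.

Lemma ordS0_val : nat_of_ord (ordS (ord0 : 'I_n.+1)) = 1%N.
Proof. by rewrite ordS_val_lt // eq_sym ord_max_neq0. Qed.

Lemma ordS0_neq_max : ordS (ord0 : 'I_n.+1) != ord_max.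
Proof. by apply/eqP => /(congr1 (@nat_of_ord _)); rewrite ordS0_val /=; lia. Qed.

Lemma ord_pred0 : ord_pred (ord0 : 'I_n.+1) = ord_max.
Proof. by rewrite -ordS_max ordSK. Qed.

Lemma inord0 : inord 0 = ord0 :> 'I_n.+1.
Proof. by apply: val_inj; rewrite /= inordK. Qed.

Lemma ordS_inord k : (k < n)%N -> ordS (inord k : 'I_n.+1) = inord k.+1.
Proof.
by move=> lt_kn; apply: ord_inj; rewrite ordS_val !inordK ?ltnS ?lt_kn // ltnW.
Qed.

Lemma mulmx_gain_cycle m psi (X : 'M[C]_(m, n.+1)) r j :
  (X *m gain_adj (@cycle_adj n.+1) psi) r j
    = X r (ord_pred j) * psi (ord_pred j) j + X r (ordS j) * psi (ordS j) j.
Proof.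
have ne_S_pred : ordS j != ord_pred j by apply: ordS_neq_pred.
rewrite !mxE (bigD1 (ord_pred j)) //= (bigD1 (ordS j)) ?ne_S_pred //=.
rewrite big1 ?addr0 => [|i /andP[ne_pred ne_S]].
  by rewrite !mxE !(cycle_adj_sym _ j) !cycle_adjE !eqxx orbT.
by rewrite mxE cycle_adj_sym cycle_adjE (negbTE ne_pred) (negbTE ne_S) mulr0.
Qed.

Definition cycle_std_gain g i j : C :=
  if (i == ord_max) && (j == ord0) then g
  else if (i == ord0) && (j == ord_max) then g^* else 1.

Lemma cycle_std_gain_fwd g i :
  cycle_std_gain g i (ordS i) = if i == ord_max then g else 1.
Proof.
rewrite /cycle_std_gain ordS_eq0 andbb; case: ifP => // _.
by case: eqP => //= ->; rewrite (negbTE ordS0_neq_max).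
Qed.

Lemma cycle_std_gain_bwd g j :
  cycle_std_gain g (ordS j) j = if j == ord_max then g^* else 1.
Proof.
rewrite /cycle_std_gain ordS_eq0; have [->|_] := eqVneq j ord_max.
  by rewrite ordS_max (negbTE ord_max_neq0) andbF.
by case: (j =P ord0) => [->|_]; rewrite ?andbF ?(negbTE ordS0_neq_max).
Qed.

Lemma cycle_std_gainC g j :
  cycle_std_gain g (ordS j) j = (cycle_std_gain g j (ordS j))^*.
Proof. by rewrite cycle_std_gain_bwd cycle_std_gain_fwd; case: ifP; rewrite ?conjC1. Qed.

Definition cycle_potential phi j : C := \prod_(i < n.+1 | (i < j)%N) phi i (ordS i).

Lemma cycle_potential_le phi j :
  cycle_potential phi j * phi j (ordS j) = \prod_(i < n.+1 | (i <= j)%N) phi i (ordS i).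
Proof.
rewrite [RHS](bigD1 j) //= mulrC; congr (_ * _); apply: eq_bigl => i.
by rewrite ltn_neqAle andbC.
Qed.

Lemma cycle_potential0 phi : cycle_potential phi ord0 = 1.
Proof. by rewrite /cycle_potential big_pred0. Qed.

Lemma cycle_potentialS phi j : j != ord_max ->
  cycle_potential phi (ordS j) = cycle_potential phi j * phi j (ordS j).
Proof. by move=> ne_max; rewrite cycle_potential_le /cycle_potential ordS_val_lt. Qed.

Lemma cycle_potential_max phi :
  cycle_potential phi ord_max * phi ord_max (ordS ord_max) = cycle_gain phi.
Proof. by rewrite cycle_potential_le; apply: eq_bigl => i; rewrite -ltnS ltn_ord. Qed.

Lemma gain_rank_cycle_std phi : unit_gain (@cycle_adj n.+1) phi ->
  gain_rank (@cycle_adj n.+1) phi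
    = \rank (gain_adj (@cycle_adj n.+1) (cycle_std_gain (cycle_gain phi))).
Proof.
move=> phi_unit; set s := cycle_potential phi.
have edge_unit i : `|phi i (ordS i)| = 1 /\ phi (ordS i) i = (phi i (ordS i))^*.
  by apply: phi_unit; rewrite /cycle_adj eqxx.
have s_unit j : `|s j| = 1 by rewrite normr_prod big1 // => i _; case: (edge_unit i).
have fwd i : cycle_std_gain (cycle_gain phi) i (ordS i)
             = s i * phi i (ordS i) * (s (ordS i))^*.
  rewrite cycle_std_gain_fwd; have [->|ne_max] := eqVneq i ord_max.
    by rewrite /s cycle_potential_max ordS_max cycle_potential0 conjC1 mulr1.
  by rewrite /s cycle_potentialS // -normCK normrM s_unit (edge_unit i).1 mulr1 expr1n.
rewrite /gain_rank; symmetry; apply: (gain_adj_switch s_unit) => i j.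
case/orP => /eqP->; first exact: fwd.
rewrite cycle_std_gainC fwd (edge_unit j).2 !rmorphM /= conjCK.
by rewrite mulrC [(s j)^* * _]mulrC mulrA.
Qed.

Local Notation stdmx g := (gain_adj (@cycle_adj n.+1) (cycle_std_gain g)).

Lemma mulmx_std_cycle g m (X : 'M[C]_(m, n.+1)) r j :
  (X *m stdmx g) r j = X r (ord_pred j) * (if j == ord0 then g else 1)
                       + X r (ordS j) * (if j == ord_max then g^* else 1).
Proof.
rewrite mulmx_gain_cycle cycle_std_gain_bwd; congr (_ * _ + _).
by rewrite -{2}[j]ord_predK cycle_std_gain_fwd -ordS_eq0 ord_predK.
Qed.

Definition alt_sign (r : 'I_2) k : C := if odd k == odd r then (-1) ^+ k./2 else 0.

Definition altmx : 'M[C]_(2, n.+1) := \matrix_(r, k) alt_sign r k.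

Lemma alt_signSS r k : alt_sign r k.+2 = - alt_sign r k.
Proof. by rewrite /alt_sign /= negbK; case: ifP; rewrite ?oppr0 // exprS mulN1r. Qed.

Lemma row_free_altmx : row_free altmx.
Proof.
have le2n : (2 <= n.+1)%N by rewrite ltnW.
have alt_id : colsub (widen_ord le2n) altmx = 1%:M.
  by apply/matrixP => -[[|[|//]] ?] [[|[|//]] ?]; rewrite !mxE.
by rewrite /row_free eqn_leq rank_leq_row -{1}(mxrank1 C 2) -alt_id colsubE mxrankM_maxl.
Qed.

Lemma altmx_std_inner g r j :
  j != ord0 -> j != ord_max -> (altmx *m stdmx g) r j = 0.
Proof.
move=> ne0 ne_max; rewrite mulmx_std_cycle (negbTE ne0) (negbTE ne_max) !mulr1 !mxE.
rewrite ord_pred_val // ordS_val_lt //.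
have : nat_of_ord j != 0%N by apply: contra ne0 => /eqP j0; apply/eqP/val_inj.
by case: (nat_of_ord j) => // k _; rewrite alt_signSS addrN.
Qed.

Lemma std_cycle_rv_eq0 g (w : 'rV[C]_n.+1) :
  w 0 ord0 = 0 -> w 0 (ordS ord0) = 0 ->
  (forall j, j != ord0 -> j != ord_max -> (w *m stdmx g) 0 j = 0) -> w = 0.
Proof.
move=> w0 w1 w_rec.
have w_eq0 k : (k < n)%N -> w 0 (inord k) = 0 /\ w 0 (inord k.+1) = 0.
  elim: k => [|k IHk] lt_kn; first by rewrite -ordS_inord // inord0.
  have [wk wk1] := IHk (ltnW lt_kn); split=> //.
  have j_ne0 : inord k.+1 != ord0 :> 'I_n.+1 by rewrite -val_eqE /= inordK // ltnW.
  have j_ne_max : inord k.+1 != ord_max :> 'I_n.+1.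
    by rewrite -val_eqE /= inordK ?neq_ltn ?lt_kn // ltnW.
  have := w_rec _ j_ne0 j_ne_max.
  rewrite mulmx_std_cycle (negbTE j_ne0) (negbTE j_ne_max).
  by rewrite (ordS_inord lt_kn) -(ordS_inord (ltnW lt_kn)) ordSK wk mul0r add0r mulr1.
apply/rowP => j; rewrite mxE -(inord_val j).
case: (nat_of_ord j) (ltn_ord j) => [|k] lt_kn; first by rewrite inord0.
by case: (w_eq0 k lt_kn).
Qed.

Lemma std_cycle_kermx_sub g : (kermx (stdmx g) <= altmx)%MS.
Proof.
apply/row_subP => i.
have : row i (kermx (stdmx g)) *m stdmx g = 0 by rewrite -row_mul mulmx_ker row0.
move: (row i _) => u uB.
pose y := \row_(r < 2) u 0 (inord r).
have wE k : (u - y *m altmx) 0 k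
             = u 0 k - (u 0 (inord 0) * alt_sign 0 k + u 0 (inord 1) * alt_sign 1 k).
  by rewrite !mxE !big_ord_recl big_ord0 addr0 !mxE.
suff -> : u = y *m altmx by apply: submxMl.
apply/eqP; rewrite -subr_eq0; apply/eqP; apply: (std_cycle_rv_eq0 (g := g)).
- by rewrite wE inord0 /alt_sign /= mulr1 mulr0 addr0 subrr.
- rewrite wE -(ordS_inord (ltnW n_gt1)) inord0 /alt_sign ordS0_val /=.
  by rewrite mulr0 mulr1 add0r subrr.
move=> j ne0 ne_max; rewrite mulmxBl uB -mulmxA sub0r mxE mxE big1 ?oppr0 // => r _.
by rewrite altmx_std_inner ?mulr0.
Qed.

Definition boundary_vertex (c : 'I_2) : 'I_n.+1 := if c == 0 then ord0 else ord_max.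

Definition std_cycle_boundary g : 'M[C]_2 := colsub boundary_vertex (altmx *m stdmx g).

Lemma rank_std_cycle g :
  (\rank (stdmx g) + 2 = n.+1 + \rank (std_cycle_boundary g))%N.
Proof.
rewrite (mxrank_kermx_sub row_free_altmx (std_cycle_kermx_sub g)).
rewrite mxrank_colsub_supp // => [|j j_out].
  move=> c c' /(congr1 (@nat_of_ord _)) eq_cc'; apply: ord_inj; move: eq_cc'.
  by rewrite /boundary_vertex; case: c c' => [[|[|//]] ?] [[|[|//]] ?] /=; lia.
apply/colP => r; rewrite [LHS]mxE altmx_std_inner ?mxE //.
- by apply: contraNneq j_out => ->; apply/codomP; exists 0.
- by apply: contraNneq j_out => ->; apply/codomP; exists 1.
Qed.

Lemma std_cycle_boundaryE g r c : std_cycle_boundary g r c =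
  if c == 0 then alt_sign r n * g + alt_sign r 1
  else alt_sign r n.-1 + alt_sign r 0 * g^*.
Proof.
rewrite mxE /boundary_vertex; case: ifP => _; rewrite mulmx_std_cycle !mxE.
  by rewrite eqxx eq_sym (negbTE ord_max_neq0) mulr1 ord_pred0 ordS0_val.
by rewrite eqxx (negbTE ord_max_neq0) mulr1 ord_pred_val ?ord_max_neq0 // ordS_max.
Qed.

Lemma std_cycle_rank_even g :
  odd n -> (\rank (std_cycle_boundary g) = 0)%N <-> g = (-1) ^+ (n.+1 %/ 2).
Proof.
move=> odd_n; have [k def_n] : exists k, n = k.*2.+1.
  by exists n./2; rewrite -{1}(odd_double_half n) odd_n.
have sqr_x : (-1) ^+ k * (-1) ^+ k = 1 :> C by rewrite -expr2 sqrr_sign.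
have M_E r c : std_cycle_boundary g r c =
    if c == 0 then (if odd r then (-1) ^+ k * g + 1 else 0)
    else if odd r then 0 else (-1) ^+ k + g^*.
  rewrite std_cycle_boundaryE /alt_sign def_n /= odd_double uphalf_double doubleK.
  by case: ifP => _; case: (odd r); rewrite ?mul0r ?add0r ?addr0 ?mul1r.
rewrite def_n divn2 /= doubleK exprS mulN1r; split => [/eqP|g_def].
  rewrite mxrank_eq0 => /eqP/matrixP/(_ 1 0); rewrite M_E mxE /=.
  move=> /eqP; rewrite addr_eq0 => /eqP xg.
  by rewrite -[g]mul1r -{1}sqr_x -mulrA xg mulrN1.
apply/eqP; rewrite mxrank_eq0; apply/eqP/matrixP => r c.
rewrite M_E mxE g_def rmorphN rmorph_sign mulrN sqr_x addNr subrr.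
by case: ifP; case: ifP.
Qed.

Lemma std_cycle_rank_odd g :
  ~~ odd n -> (\rank (std_cycle_boundary g) = 1)%N <-> 'Re ((-1) ^+ (n %/ 2) * g) = 0.
Proof.
move=> even_n; have [k def_n] : exists k, n = k.+1.*2.
  have := odd_double_half n; rewrite (negbTE even_n) add0n -muln2 => def2.
  by exists n./2.-1; rewrite -muln2; lia.
have M_E r c : std_cycle_boundary g r c =
    if c == 0 then (if odd r then 1 else - (-1) ^+ k * g)
    else if odd r then (-1) ^+ k else g^*.
  rewrite std_cycle_boundaryE /alt_sign def_n doubleS /= odd_double uphalf_double doubleK.
  by case: ifP => _; case: (odd r); rewrite ?mul0r ?add0r ?addr0 ?mul1r ?exprS ?mulN1r.
have M_neq0 : std_cycle_boundary g != 0.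
  by apply/eqP => /matrixP/(_ 1 0); rewrite M_E mxE /=; apply/eqP; apply: oner_neq0.
rewrite mxrank2_eq1 // det_mx22 !M_E /= Re_eq0 def_n divn2 doubleK exprS mulN1r.
have sqr_x : (-1) ^+ k * (-1) ^+ k = 1 :> C by rewrite -expr2 sqrr_sign.
set x : C := (-1) ^+ k in sqr_x *.
rewrite mulr1 mulrAC [- x * x]mulNr sqr_x mulN1r -opprD rmorphM rmorphN rmorph_sign /=.
rewrite -mulrDr; split=> [/eqP|/eqP]; rewrite ?oppr_eq0 ?mulf_eq0 ?oppr_eq0 ?signr_eq0 /=.
  by move/eqP->; rewrite mulr0.
by move/eqP->; rewrite oppr0.
Qed.

Lemma std_cycle_boundary_rank g :
  (\rank (std_cycle_boundary g) = odd n.+1) <->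
  (~~ odd n.+1 /\ g = (-1) ^+ (n.+1 %/ 2))
  \/ (odd n.+1 /\ 'Re ((-1) ^+ ((n.+1 - 1) %/ 2) * g) = 0).
Proof.
rewrite subn1 /=; have [odd_n|even_n] := boolP (odd n) => /=.
  apply: iff_trans (std_cycle_rank_even g odd_n) _.
  by split=> [|[[]|[]]]; [left|..].
apply: iff_trans (std_cycle_rank_odd g even_n) _.
by split=> [|[[]|[]]]; [right|..].
Qed.

End GainCycle.

Theorem lemma4p3 (C : numClosedFieldType) (q : nat) (phi : 'I_q -> 'I_q -> C) :
  (3 <= q)%N ->
  unit_gain (@cycle_adj q) phi ->
  ((gain_rank (@cycle_adj q) phi)%:Z
     = 2 * (q%:Z) - 2 * cyclomatic (@cycle_adj q) - 2 * (alpha (@cycle_adj q))%:Z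
   <->
   (~~ odd q /\ cycle_gain phi = (-1) ^+ (q %/ 2)%N)
   \/ (odd q /\ 'Re ((-1) ^+ ((q - 1) %/ 2)%N * cycle_gain phi) = 0)).
Proof.
case: q phi => [|[|[|n]]] // phi q_ge3 phi_unit.
have n_gt1 : (1 < n.+2)%N by [].
rewrite cyclomatic_cycle // alpha_cycle (gain_rank_cycle_std n_gt1 phi_unit).
rewrite -(std_cycle_boundary_rank n_gt1).
have := rank_std_cycle n_gt1 (cycle_gain phi).
have := odd_double_half n.+3; rewrite -muln2.
by case: (odd _) => /=; split; lia.
Qed.
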